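(* Let $(Y,D)$ be binary random variables and $Z$ a random vector; write $q_{ij}(z)=\mathbb P(Y=i,D=j\mid Z=z)$. In the generalized binary Roy model the following hold. (1) If $(Y_0,Y_1)$ is a pair of binary random variables independent of $Z$ with $Y=Y_1D+Y_0(1-D)$, then for almost all $z\in\mathrm{Supp}(Z)$: $$\begin{aligned} &0\le \mathbb P(Y_0=1,Y_1=1)\le q_{10}(z)+q_{11}(z),\qquad 0\le \mathbb P(Y_0=0,Y_1=0)\le q_{00}(z)+q_{01}(z),\\ &0\le \mathbb P(Y_0=1,Y_1=0)\le q_{10}(z)+q_{01}(z),\qquad 0\le \mathbb P(Y_0=0,Y_1=1)\le q_{00}(z)+q_{11}(z),\\ &q_{10}(z)\le \mathbb P(Y_0=1)\le 1-q_{00}(z),\qquad q_{11}(z)\le \mathbb P(Y_1=1)\le 1-q_{01}(z). \end{aligned}$$ (2) Conversely, if $(p_{00},p_{01},p_{10},p_{11})$ is a probability vector such that for almost all $z\in\mathrm{Supp}(Z)$: $p_{11}\le q_{10}(z)+q_{11}(z)$, $p_{00}\le q_{00}(z)+q_{01}(z)$, $p_{10}\le q_{10}(z)+q_{01}(z)$, $p_{01}\le q_{00}(z)+q_{11}(z)$, $q_{10}(z)\le p_{10}+p_{11}\le 1-q_{00}(z)$, $q_{11}(z)\le p_{01}+p_{11}\le 1-q_{01}(z)$, then there exist, on some probability space, random variables $(\tilde Y,\tilde D,\tilde Z,Y_0,Y_1)$ with $(\tilde Y,\tilde D,\tilde Z)$ distributed as $(Y,D,Z)$, $(Y_0,Y_1)$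 binary and independent of $\tilde Z$, $\tilde Y=Y_1\tilde D+Y_0(1-\tilde D)$, and $\mathbb P(Y_0=i,Y_1=j)=p_{ij}$ for all $i,j$.
   Context: Generalized binary Roy model: observed $Y$ and $D\in\{0,1\}$, unobserved binary potential outcomes $(Y_0,Y_1)$ (possibly dependent) with $Y=Y_1D+Y_0(1-D)$; no restriction is placed on how $D$ is selected, except for the exclusion restriction that the observed variable $Z$ affects sector selection but not outcomes, i.e. $(Y_0,Y_1)$ is independent of $Z$. $\mathrm{Supp}(Z)$ is the support of $Z$. *)

From HB Require Import structures.
From mathcomp Require Import all_boot all_order all_algebra.
From mathcomp Require Import all_classical all_reals all_analysis.
Set Implicit Arguments. Unset Strict Implicit. Unset Printing Implicit Defensive.
Import Order.TTheory GRing.Theory Num.Theory.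
Local Open Scope classical_set_scope.
Local Open Scope ring_scope.
Local Open Scope ereal_scope.

Definition independent_rv d d1 d2 (T : measurableType d)
  (T1 : measurableType d1) (T2 : measurableType d2) (R : realType)
  (P : probability T R) (X : T -> T1) (W : T -> T2) : Prop :=
  forall (A : set T1) (B : set T2), measurable A -> measurable B ->
    P (X @^-1` A `&` W @^-1` B) = P (X @^-1` A) * P (W @^-1` B).

(* q is a version of the conditional probabilities
   q i j z = P(Y = i, D = j | Z = z): measurable in z and
   P(Y = i, D = j, Z \in B) = \int_B q i j dP_Z for all measurable B. *)
Definition cond_prob_version d dz (T : measurableType d)
  (TZ : measurableType dz) (R : realType) (P : probability T R)
  (Y D : T -> bool) (Z : T -> TZ) (q : bool -> bool -> TZ -> R) : Prop :=
  (forall i j, measurable_fun setT (q i j)) /\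
  (forall i j (B : set TZ), measurable B ->
     P ([set w | Y w = i /\ D w = j] `&` Z @^-1` B)
     = \int[pushforward P Z]_(z in B) (q i j z)%:E).

Definition same_law d d' dx (T : measurableType d) (T' : measurableType d')
  (TX : measurableType dx) (R : realType)
  (P : probability T R) (P' : probability T' R) (X : T -> TX) (X' : T' -> TX)
  : Prop :=
  forall A : set TX, measurable A -> P (X @^-1` A) = P' (X' @^-1` A).

(* Let mu be the law of Z.  (1) An event about (Y0, Y1) is independent of Z,
   so its conditional probability given Z is the constant P(event); an
   inclusion between events gives a mu-a.e. inequality between conditional
   probabilities, e.g. {Y0 = a, Y1 = b} lies in {Y = a, D = 0} u {Y = b, D = 1}
   and {Y = a, D = 0} lies in {Y0 = a}.  (2) Put on Z x {0,1}^3 the law of Z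
   mixed with weights w_z(y0, y1, d) whose (y0, y1)-marginal is p for every z,
   which makes (Y0, Y1) independent of Z with law p, and whose sums over the
   observed cells {Y = i, D = j} are q_ij(z), which gives (Y, D, Z) its law.
   Such weights exist exactly when the sharp bounds hold at z. *)

From HB Require Import structures.
From mathcomp Require Import all_boot all_order all_algebra.
From mathcomp Require Import all_classical all_reals all_analysis.
From mathcomp Require Import measurable_realfun lra.
Set Implicit Arguments. Unset Strict Implicit. Unset Printing Implicit Defensive.
Import Order.TTheory GRing.Theory Num.Theory.
Local Open Scope classical_set_scope.
Local Open Scope ring_scope.
Local Open Scope ereal_scope.

Lemma ae_ge0_from_integrals d (X : measurableType d) (R : realType)
    (mu : {measure set X -> \bar R}) (f : X -> R) :
  measurable_fun setT f ->
  (forall B, measurable B -> 0 <= \int[mu]_(x in B) (f x)%:E) ->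
  {ae mu, forall x, (0 <= f x)%R}.
Proof.
move=> mf intf_ge0; pose N := [set x | (f x < 0)%R].
have mN : measurable N.
  have -> : N = f @^-1` `]-oo, 0%R[.
    by apply/seteqP; split => x /=; rewrite in_itv.
  by rewrite -[X in measurable X]setTI; exact: mf.
have mfN := proj2 (measurable_EFinP N f) (measurable_funTS mf).
have N_abs0 : \int[mu]_(x in N) `|(EFin \o f) x| = 0.
  have intN : \int[mu]_(x in N) (f x)%:E = - \int[mu]_(x in N) `|(EFin \o f) x|.
    rewrite -integral_ge0N; last by move=> *; exact: abse_ge0.
    by apply: eq_integral => x; rewrite inE /= => /ltr0_norm ->; rewrite opprK.
  apply/eqP; rewrite eq_le integral_ge0 ?andbT; last by move=> *; exact: abse_ge0.
  by rewrite -oppe_ge0 -intN intf_ge0.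
apply: filterS (proj1 (ae_eq_integral_abs mu mN mfN) N_abs0) => x fN0.
rewrite leNgt; apply/negP => fx_lt0.
by have [/eqP] := fN0 fx_lt0; rewrite lt_eqF.
Qed.

Lemma integral_cstr d (X : measurableType d) (R : realType)
    (mu : {measure set X -> \bar R}) B (r : R) : measurable B ->
  \int[mu]_(z in B) r%:E = r%:E * mu B.
Proof. by move=> mB; exact: (integral_cst _ mB r%:E). Qed.

Section conditional_probability.
Context d dX (T : measurableType d) (X : measurableType dX) (R : realType)
  (P : probability T R) (Z : {mfun T >-> X}).
Local Notation mu := (distribution P Z).

Definition is_cond_prob (S : set T) (g : X -> R) :=
  measurable_fun setT g /\
  forall B, measurable B -> P (S `&` Z @^-1` B) = \int[mu]_(z in B) (g z)%:E.

Let mSZ S B : measurable S -> measurable B -> measurable (S `&` Z @^-1` B).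
Proof. by move=> mS mB; apply: measurableI mS (measurable_funPTI Z mB). Qed.

Lemma is_cond_probT : is_cond_prob setT (fun=> 1%R).
Proof. by split=> // B mB; rewrite setTI integral_cstr// mul1e. Qed.

Lemma is_cond_prob_cst E : measurable E ->
  (forall B, measurable B -> P (E `&` Z @^-1` B) = P E * P (Z @^-1` B)) ->
  is_cond_prob E (fun=> fine (P E)).
Proof.
move=> mE indep; split=> // B mB.
by rewrite integral_cstr// fineK ?fin_num_measure//; exact: indep.
Qed.

Section cond_prob_of_event.
Variables (S : set T) (g : X -> R).
Hypotheses (mS : measurable S) (Sg : is_cond_prob S g).

Lemma is_cond_prob_ge0 : {ae mu, forall z, (0 <= g z)%R}.
Proof.
case: Sg => mg Sg'; apply: ae_ge0_from_integrals => // B mB.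
by rewrite -Sg'.
Qed.

Lemma is_cond_prob_integrable : mu.-integrable setT (EFin \o g).
Proof.
case: Sg => mg Sg'; apply/integrableP; split; first exact/measurable_EFinP.
rewrite (@ae_eq_integral _ _ _ mu setT (EFin \o g) (fun z => `|(EFin \o g) z|))//.
- by rewrite -Sg'// (le_lt_trans (probability_le1 P (mSZ mS measurableT))) ?ltry.
- by apply: measurableT_comp => //; exact/measurable_EFinP.
- exact/measurable_EFinP.
- by apply: filterS is_cond_prob_ge0 => z g0 _; rewrite gee0_abs// lee_fin.
Qed.

Lemma is_cond_probC : is_cond_prob (~` S) (fun z => 1 - g z)%R.
Proof.
case: Sg => mg Sg'; split=> [|B mB]; first exact: measurable_funB.
have mZB := measurable_funPTI Z mB.
have -> : P (~` S `&` Z @^-1` B) = P (Z @^-1` B) - P (S `&` Z @^-1` B).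
  rewrite setIC -setDE measureD ?(le_lt_trans (probability_le1 P mZB)) ?ltry//.
  by rewrite setIC.
under eq_integral do rewrite EFinB.
rewrite Sg'// integralB_EFin// ?integral_cstr ?mul1e//.
- exact: finite_measure_integrable_cst.
- exact: integrableS is_cond_prob_integrable.
Qed.

End cond_prob_of_event.

Lemma is_cond_probU S S' g g' : measurable S -> measurable S' ->
  S `&` S' = set0 -> is_cond_prob S g -> is_cond_prob S' g' ->
  is_cond_prob (S `|` S') (fun z => g z + g' z)%R.
Proof.
move=> mS mS' SS' Sg S'g'; have [mg Sg'] := Sg; have [mg' S'g''] := S'g'.
split=> [|B mB]; first exact: measurable_funD.
rewrite (_ : \int[mu]_(z in B) _ =
    \int[mu]_(z in B) (g z)%:E + \int[mu]_(z in B) (g' z)%:E).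
  rewrite -Sg'// -S'g''// setIUl measureU //; try exact: mSZ.
  by rewrite setIACA SS' set0I.
rewrite -integralD_EFin//.
- exact: integrableS (is_cond_prob_integrable mS Sg).
- exact: integrableS (is_cond_prob_integrable mS' S'g').
Qed.

Lemma is_cond_prob_le S S' g g' : measurable S -> measurable S' ->
  S `<=` S' -> is_cond_prob S g -> is_cond_prob S' g' ->
  {ae mu, forall z, (g z <= g' z)%R}.
Proof.
move=> mS mS' SS' Sg S'g'; have [mg Sg'] := Sg; have [mg' S'g''] := S'g'.
have : {ae mu, forall z, (0 <= g' z - g z)%R}.
  apply: ae_ge0_from_integrals => [|B mB]; first exact: measurable_funB.
  under eq_integral do rewrite EFinB.
  rewrite integralB_EFin//.
  - have [mSB mS'B] := (mSZ mS mB, mSZ mS' mB).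
    rewrite -Sg'// -S'g''// sube_ge0 ?fin_num_measure//.
    by apply: le_measure; rewrite ?inE//; exact: setSI.
  - exact: integrableS (is_cond_prob_integrable mS' S'g').
  - exact: integrableS (is_cond_prob_integrable mS Sg).
by apply: filterS => z; rewrite subr_ge0.
Qed.

End conditional_probability.

Lemma measurable_pair_event d (T : measurableType d) (Y0 Y1 : T -> bool)
    (C : bool -> bool -> Prop) :
  measurable_fun setT Y0 -> measurable_fun setT Y1 ->
  measurable [set w | C (Y0 w) (Y1 w)].
Proof.
move=> mY0 mY1; have mpre (f : T -> bool) (A : set bool) :
    measurable_fun setT f -> measurable (f @^-1` A).
  by move=> mf; rewrite -[X in measurable X]setTI; exact: mf.
have -> : [set w | C (Y0 w) (Y1 w)] =
    Y0 @^-1` [set true] `&` Y1 @^-1` [set b | C true b] `|`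
    Y0 @^-1` [set false] `&` Y1 @^-1` [set b | C false b].
  apply/seteqP; split=> [w|w [] [/= -> //]].
  by rewrite /=; case: (Y0 w) => Cw; [left|right].
by apply: measurableU; apply: measurableI; exact: mpre.
Qed.

Section cell_partition.
Context d (T : measurableType d) (R : realType) (mu : {measure set T -> \bar R})
  (Y D : T -> bool).
Hypotheses (mY : measurable_fun setT Y) (mD : measurable_fun setT D).

Let measure_bool_partition (f : T -> bool) G :
  measurable_fun setT f -> measurable G ->
  mu G = \sum_(b : bool) mu (G `&` f @^-1` [set b]).
Proof.
move=> mf mG; have mGf b : measurable (G `&` f @^-1` [set b]).
  by apply: measurableI mG _; rewrite -[X in measurable X]setTI; exact: mf.
have GE : G = (G `&` f @^-1` [set true]) `|` (G `&` f @^-1` [set false]).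
  apply/seteqP; split=> [w Gw|w [] []//].
  by case fw: (f w); [left|right].
rewrite big_bool {1}GE measureU//.
by apply/seteqP; split=> // w [[_ /= ->] [_]].
Qed.

Lemma measure_cell_partition G : measurable G ->
  mu G = \sum_(yd : bool * bool) mu (G `&` [set w | Y w = yd.1 /\ D w = yd.2]).
Proof.
move=> mG; rewrite (measure_bool_partition mY mG) -(pair_bigA _ (fun y d =>
  mu (G `&` [set w | Y w = y /\ D w = d]))) /=.
apply: eq_bigr => y _; rewrite (measure_bool_partition mD)//; last first.
  by apply: measurableI mG _; rewrite -[X in measurable X]setTI; exact: mY.
by apply: eq_bigr => t _; rewrite -setIA.
Qed.

End cell_partition.

Lemma sum_bool2 (V : nmodType) (F : bool * bool -> V) :
  (\sum_ab F ab =
   F (false, false) + F (false, true) + F (true, false) + F (true, true))%R.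
Proof.
rewrite (eq_bigr (fun ab => F (ab.1, ab.2))); last by case.
rewrite -(pair_bigA _ (fun a b => F (a, b))) /= !big_bool /=.
by rewrite addrC [(F (false, true) + _)%R]addrC addrA addrAC.
Qed.

Definition prob_vector (R : numDomainType) (p : bool -> bool -> R) :=
  ((forall i j, 0 <= p i j) /\
   p false false + p false true + p true false + p true true = 1)%R.

Section cond_prob_version_theory.
Context d dX (T : measurableType d) (X : measurableType dX) (R : realType)
  (P : probability T R) (Z : {mfun T >-> X}) (Y D : T -> bool)
  (q : bool -> bool -> X -> R).
Hypotheses (mY : measurable_fun setT Y) (mD : measurable_fun setT D)
  (Hq : cond_prob_version P Y D Z q).
Local Notation mu := (distribution P Z).

Lemma cond_prob_version_cell i j :
  is_cond_prob P Z [set w | Y w = i /\ D w = j] (q i j).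
Proof. by case: Hq => mq qE; split; [exact: mq|exact: qE]. Qed.

Let mYDZ : measurable_fun setT (fun w => (Y w, D w, Z w)).
Proof.
apply: measurable_fun_pair; first exact: measurable_fun_pair.
exact: measurable_funP.
Qed.

Lemma law_of_cond_prob A : measurable A ->
  P ((fun w => (Y w, D w, Z w)) @^-1` A) =
  \sum_(yd : bool * bool) \int[mu]_(z in xsection A yd) (q yd.1 yd.2 z)%:E.
Proof.
move=> mA; rewrite (measure_cell_partition P mY mD); last first.
  by rewrite -[X in measurable X]setTI; exact: mYDZ.
apply: eq_bigr => -[y t] _ /=.
have -> : (fun w => (Y w, D w, Z w)) @^-1` A `&` [set w | Y w = y /\ D w = t] =
    [set w | Y w = y /\ D w = t] `&` Z @^-1` xsection A (y, t).
  apply/seteqP; split=> w /=; rewrite /xsection /= inE.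
    by case=> Aw [Yw Dw]; rewrite -Yw -Dw.
  by case=> -[Yw Dw]; rewrite -Yw -Dw.
exact: (proj2 (cond_prob_version_cell y t)) _ (measurable_xsection _ mA).
Qed.

Lemma cond_prob_vector : {ae mu, forall z, prob_vector (fun i j => q i j z)}.
Proof.
have mcell i j : measurable [set w | Y w = i /\ D w = j].
  exact: (measurable_pair_event (fun y t => y = i /\ t = j) mY mD).
have q_sum : is_cond_prob P Z setT
    (fun z => \sum_(yd : bool * bool) q yd.1 yd.2 z)%R.
  split=> [|B mB]; first by apply: measurable_sum => yd; case: Hq.
  rewrite setTI (measure_cell_partition P mY mD); last exact: measurable_funPTI.
  under eq_integral do rewrite -sumEFin.
  rewrite integral_sum//; last first.
    move=> yd; apply: integrableS (is_cond_prob_integrable (mcell _ _)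
      (cond_prob_version_cell yd.1 yd.2)) => //.
  apply: eq_bigr => -[y t] _; rewrite setIC.
  exact: (proj2 (cond_prob_version_cell y t)).
have sum_le1 := is_cond_prob_le measurableT measurableT (@subset_refl _ _)
  q_sum (is_cond_probT P Z).
have sum_ge1 := is_cond_prob_le measurableT measurableT (@subset_refl _ _)
  (is_cond_probT P Z) q_sum.
have sum1 : {ae mu, forall z,
    q false false z + q false true z + q true false z + q true true z = 1}%R.
  apply: filterS2 sum_le1 sum_ge1 => z; rewrite sum_bool2 => le1 ge1.
  by apply/eqP; rewrite eq_le le1 ge1.
have q_ge0 i j := is_cond_prob_ge0 (cond_prob_version_cell i j).
near=> z; split; last exact: (near sum1 z).
by case; case; exact: (near (q_ge0 _ _) z).
Unshelve. all: by end_near.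
Qed.

End cond_prob_version_theory.

Section roy_model_bounds.
Context d dX (T : measurableType d) (X : measurableType dX) (R : realType)
  (P : probability T R) (Z : {mfun T >-> X}) (Y D Y0 Y1 : T -> bool)
  (q : bool -> bool -> X -> R).
Hypotheses (mY : measurable_fun setT Y) (mD : measurable_fun setT D)
  (mY0 : measurable_fun setT Y0) (mY1 : measurable_fun setT Y1)
  (Hq : cond_prob_version P Y D Z q)
  (indep : independent_rv P (fun w => (Y0 w, Y1 w)) Z)
  (roy : forall w, Y w = if D w then Y1 w else Y0 w).
Local Notation mu := (distribution P Z).
Local Notation cell i j := [set w | Y w = i /\ D w = j].
Local Notation event C := [set w | C (Y0 w) (Y1 w)].

Let mcell i j : measurable (cell i j).
Proof. exact: (measurable_pair_event (fun y t => y = i /\ t = j) mY mD). Qed.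

Let mevent C : measurable (event C).
Proof. exact: measurable_pair_event. Qed.

Let cell_cond_prob := cond_prob_version_cell Hq.

Let event_cond_prob C : is_cond_prob P Z (event C) (fun=> fine (P (event C))).
Proof.
apply: is_cond_prob_cst => // B mB.
exact: indep (measurable_pair_event C measurable_fst measurable_snd) mB.
Qed.

Let probE C : P (event C) = (fine (P (event C)))%:E.
Proof. by rewrite fineK ?fin_num_measure. Qed.

Lemma prob_potentials_le a b :
  {ae mu, forall z, P [set w | Y0 w = a /\ Y1 w = b]
                    <= (q a false z + q b true z)%:E}.
Proof.
have disj : cell a false `&` cell b true = set0.
  by apply/seteqP; split=> // w [[_ Df] [_]]; rewrite Df.
have sub : [set w | Y0 w = a /\ Y1 w = b] `<=` cell a false `|` cell b true.
  by move=> w /= [<- <-]; rewrite roy; case: (D w); [right|left].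
have := is_cond_prob_le (mevent _) (measurableU _ _ (mcell _ _) (mcell _ _)) sub
  (event_cond_prob (fun y0 y1 => y0 = a /\ y1 = b))
  (is_cond_probU (mcell _ _) (mcell _ _) disj (cell_cond_prob a false)
    (cell_cond_prob b true)).
apply: filterS => z le_z.
by rewrite (probE (fun y0 y1 => y0 = a /\ y1 = b)) lee_fin.
Qed.

Lemma cond_prob_le_potential a t :
  {ae mu, forall z, (q a t z)%:E <= P [set w | (if t then Y1 w else Y0 w) = a]}.
Proof.
have sub : cell a t `<=` [set w | (if t then Y1 w else Y0 w) = a].
  by move=> w /= [<- Dt]; rewrite roy Dt.
have := is_cond_prob_le (mcell a t) (mevent _) sub (cell_cond_prob a t)
  (event_cond_prob (fun y0 y1 => (if t then y1 else y0) = a)).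
apply: filterS => z le_z.
by rewrite (probE (fun y0 y1 => (if t then y1 else y0) = a)) lee_fin.
Qed.

Lemma potential_le_cond_prob a t :
  {ae mu, forall z,
     P [set w | (if t then Y1 w else Y0 w) = a] <= (1 - q (~~ a) t z)%:E}.
Proof.
have sub : cell (~~ a) t `<=` ~` [set w | (if t then Y1 w else Y0 w) = a].
  by move=> w /= []; rewrite roy => + Dt; rewrite Dt => ->; case: a.
have := is_cond_prob_le (mcell _ t) (measurableC (mevent _)) sub
  (cell_cond_prob (~~ a) t)
  (is_cond_probC (mevent _)
    (event_cond_prob (fun y0 y1 => (if t then y1 else y0) = a))).
apply: filterS => z le_z.
by rewrite (probE (fun y0 y1 => (if t then y1 else y0) = a)) lee_fin; lra.
Qed.

Lemma roy_model_bounds :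
  {ae mu, forall z,
     [/\ 0 <= P [set w | Y0 w = true /\ Y1 w = true]
           <= (q true false z + q true true z)%:E &
     [/\
         0 <= P [set w | Y0 w = false /\ Y1 w = false]
           <= (q false false z + q false true z)%:E,
         0 <= P [set w | Y0 w = true /\ Y1 w = false]
           <= (q true false z + q false true z)%:E,
         0 <= P [set w | Y0 w = false /\ Y1 w = true]
           <= (q false false z + q true true z)%:E,
         (q true false z)%:E <= P [set w | Y0 w = true]
           <= (1 - q false false z)%:E &
         (q true true z)%:E <= P [set w | Y1 w = true]
           <= (1 - q false true z)%:E]]}.
Proof.
near=> z; split; [|split]; rewrite ?measure_ge0 //=.
- exact: (near (prob_potentials_le true true) z).
- exact: (near (prob_potentials_le false false) z).
- exact: (near (prob_potentials_le true false) z).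
- exact: (near (prob_potentials_le false true) z).
- apply/andP; split; first exact: (near (cond_prob_le_potential true false) z).
  exact: (near (potential_le_cond_prob true false) z).
- apply/andP; split; first exact: (near (cond_prob_le_potential true true) z).
  exact: (near (potential_le_cond_prob true true) z).
Unshelve. all: by end_near.
Qed.

End roy_model_bounds.

Lemma same_law_of_cond_prob d d' dX (T : measurableType d)
    (T' : measurableType d') (X : measurableType dX) (R : realType)
    (P : probability T R) (P' : probability T' R)
    (Z : {mfun T >-> X}) (Z' : {mfun T' >-> X}) (Y D : T -> bool)
    (Y' D' : T' -> bool) (q : bool -> bool -> X -> R) :
  measurable_fun setT Y -> measurable_fun setT D ->
  measurable_fun setT Y' -> measurable_fun setT D' ->
  cond_prob_version P Y D Z q -> cond_prob_version P' Y' D' Z' q ->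
  same_law P P' Z Z' ->
  same_law P P' (fun w => (Y w, D w, Z w)) (fun w => (Y' w, D' w, Z' w)).
Proof.
move=> mY mD mY' mD' Hq Hq' PZ A mA.
rewrite (law_of_cond_prob mY mD Hq mA) (law_of_cond_prob mY' mD' Hq' mA).
apply: eq_bigr => yd _; apply: eq_measure_integral => B mB _.
exact: PZ.
Qed.

(* ((y0, y1), d): the two potential outcomes and the treatment. *)
Definition profile := (bool * bool * bool)%type.
HB.instance Definition _ := Pointed.on profile.
HB.instance Definition _ := @isMeasurable.Build default_measure_display profile
  discrete_measurable discrete_measurable0 discrete_measurableC
  discrete_measurableU.

Definition profile_outcome (c : profile) : bool := if c.2 then c.1.2 else c.1.1.

Lemma sum_profile (V : nmodType) (F : profile -> V) :
  (\sum_c F c = \sum_(ab : bool * bool) (F (ab, false) + F (ab, true)))%R.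
Proof.
rewrite (eq_bigr (fun c => F (c.1, c.2))); last by case.
rewrite -(pair_bigA _ (fun ab t => F (ab, t))) /=.
by apply: eq_bigr => ab _; rewrite big_bool addrC.
Qed.

Section roy_weight.
Context (R : realFieldType).
Local Open Scope ring_scope.

Definition roy_sharp_bounds (p q : bool -> bool -> R) : Prop :=
  [/\ p true true <= q true false + q true true &
  [/\ p false false <= q false false + q false true,
      p true false <= q true false + q false true,
      p false true <= q false false + q true true,
      q true false <= p true false + p true true <= 1 - q false false &
      q true true <= p false true + p true true <= 1 - q false true]].

Variables (p q : bool -> bool -> R).

(* Matching the four observed cells leaves one free parameter [t], the weight
   of ((0, 0), 0); each of the four weights gives it a lower and an upper
   bound, [t] is the largest lower bound, and the sharp bounds say precisely
   that it is below every upper bound ([roy_untreatedE]).  Clipping to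
   [0, p a b] keeps the weights admissible at the z where the bounds fail,
   a mu-null set. *)
Let s := p false false + p true false - q false true.
Let t := Num.max (Num.max 0 (q false false - p false true))
                 (Num.max (p false false - q false true) (s - q true false)).

Definition roy_untreated_raw a b :=
  match a, b with
  | false, false => t
  | false, true => q false false - t
  | true, false => s - t
  | true, true => q true false - s + t
  end.

Definition roy_untreated a b :=
  Num.min (Num.max (roy_untreated_raw a b) 0) (p a b).

Definition roy_weight (c : profile) :=
  if c.2 then p c.1.1 c.1.2 - roy_untreated c.1.1 c.1.2
  else roy_untreated c.1.1 c.1.2.

Lemma roy_weight_ge0 : (forall a b, 0 <= p a b) -> forall c, 0 <= roy_weight c.
Proof.
move=> p_ge0 c; have x_ge0 a b : 0 <= roy_untreated a b.
  by rewrite /roy_untreated le_min p_ge0 le_max lexx orbT.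
by rewrite /roy_weight; case: ifP => _; rewrite ?subr_ge0 ?ge_min ?lexx ?orbT.
Qed.

Lemma roy_weight_pair a b :
  roy_weight ((a, b), false) + roy_weight ((a, b), true) = p a b.
Proof. by rewrite /roy_weight /= addrC subrK. Qed.

Lemma roy_weight_marginal (C : pred (bool * bool)) :
  \sum_(c | C c.1) roy_weight c = \sum_(ab | C ab) p ab.1 ab.2.
Proof.
rewrite big_mkcond sum_profile [RHS]big_mkcond /=; apply: eq_bigr => -[a b] _.
by case: (C (a, b)); rewrite ?roy_weight_pair ?addr0.
Qed.

Lemma roy_weight_sum1 : prob_vector p -> \sum_c roy_weight c = 1.
Proof.
case=> _ p_sum1; have := roy_weight_marginal predT.
by rewrite !big_mkcond /= => ->; rewrite sum_bool2.
Qed.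

Lemma roy_untreatedE : prob_vector p -> prob_vector q -> roy_sharp_bounds p q ->
  forall a b, roy_untreated a b = roy_untreated_raw a b.
Proof.
move=> [p_ge0 p_sum1] [q_ge0 q_sum1] [h1 [h2 h3 h4 /andP[h5 h5'] /andP[h6 h6']]].
have := (p_ge0 false false, p_ge0 false true, p_ge0 true false, p_ge0 true true).
have := (q_ge0 false false, q_ge0 false true, q_ge0 true false, q_ge0 true true).
move=> [[[q00 q01] q10] q11] [[[p00 p01] p10] p11] a b.
have [l0 l1 l2 l3] : [/\ 0 <= t, q false false - p false true <= t,
    p false false - q false true <= t & s - q true false <= t].
  by rewrite !le_max !lexx !orbT.
have t_le u : 0 <= u -> q false false - p false true <= u ->
    p false false - q false true <= u -> s - q true false <= u -> t <= u.
  by move=> *; rewrite !ge_max; apply/andP; split; apply/andP.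
have [u0 u1 u2 u3] : [/\ t <= p false false, t <= q false false, t <= s &
    t <= s - q true false + p true true].
  by split; apply: t_le; rewrite /s; lra.
have /andP[raw_ge0 raw_le] : 0 <= roy_untreated_raw a b <= p a b.
  by case: a; case: b; apply/andP; split; rewrite /= /s in u2 u3 l2 l3 *; lra.
by rewrite /roy_untreated max_l// min_l.
Qed.

Lemma roy_weight_observed :
  prob_vector p -> prob_vector q -> roy_sharp_bounds p q -> forall y d,
  \sum_(c | (profile_outcome c == y) && (c.2 == d)) roy_weight c = q y d.
Proof.
move=> pp qp bounds y d; have xE := roy_untreatedE pp qp bounds.
case: pp qp => _ p_sum1 [_ q_sum1].
rewrite big_mkcond sum_profile sum_bool2 /roy_weight /= !xE /= /s.
by case: y; case: d => /=; lra.
Qed.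

End roy_weight.

Lemma measurable_roy_weight dX (X : measurableType dX) (R : realType)
    (p : bool -> bool -> R) (q : bool -> bool -> X -> R) :
  (forall i j, measurable_fun setT (q i j)) ->
  forall c, measurable_fun setT (fun z => roy_weight p (fun i j => q i j z) c).
Proof.
move=> mq [[a b] t]; have mraw : measurable_fun setT
    (fun z => roy_untreated_raw p (fun i j => q i j z) a b).
  by case: a; case: b => /=; repeat first
    [apply: measurable_maxr|apply: measurable_funB|apply: measurable_funD|done].
have mx : measurable_fun setT (fun z => roy_untreated p (fun i j => q i j z) a b).
  by apply: measurable_minr => //; exact: measurable_maxr.
by case: t => //=; exact: measurable_funB.
Qed.

Section mixture.
Context dX (X : measurableType dX) (R : realType) (mu : probability X R)
  (w : profile -> X -> R).
Hypotheses (mw : forall c, measurable_fun setT (w c))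
  (w_ge0 : forall c z, (0 <= w c z)%R) (w_sum1 : forall z, (\sum_c w c z = 1)%R).

Definition mixture (A : set (X * profile)) : \bar R :=
  \sum_c \int[mu]_(z in ysection A c) (w c z)%:E.

Let mixture0 : mixture set0 = 0.
Proof. by rewrite /mixture big1// => c _; rewrite ysection0 integral_set0. Qed.

Let mixture_ge0 A : 0 <= mixture A.
Proof.
by apply: sume_ge0 => c _; apply: integral_ge0 => z _; rewrite lee_fin.
Qed.

Let mixture_sigma_additive : semi_sigma_additive mixture.
Proof.
move=> F mF tF mUF; rewrite [X in _ --> X](_ : _ =
    limn (fun n => \sum_(0 <= i < n) mixture (F i))).
  by apply: is_cvg_ereal_nneg_natsum => k _; exact: mixture_ge0.
rewrite /mixture nneseries_sum; last first.
  by move=> c j _; apply: integral_ge0 => z _; rewrite lee_fin.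
apply: eq_bigr => c _; rewrite ysection_bigcup ge0_integral_bigcup//.
- by move=> k; exact: measurable_ysection.
- exact/measurable_EFinP/measurable_funTS.
- by move=> z _; rewrite lee_fin.
- exact: trivIset_ysection.
Qed.

HB.instance Definition _ := isMeasure.Build _ _ _ mixture
  mixture0 mixture_ge0 mixture_sigma_additive.

Let mixture_setT : mixture setT = 1.
Proof.
rewrite /mixture (eq_bigr (fun c => \int[mu]_(z in setT) (w c z)%:E)); last first.
  move=> c _; congr integral.
  by apply/seteqP; split=> z //=; rewrite /ysection /= in_setT.
rewrite -ge0_integral_sum//; last 2 first.
- by move=> c; exact/measurable_EFinP.
- by move=> c z _; rewrite lee_fin.
under eq_integral do rewrite sumEFin w_sum1.
by rewrite integral_cst// mul1e; exact: probability_setT.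
Qed.

HB.instance Definition _ := Measure_isProbability.Build _ _ _ mixture
  mixture_setT.

Definition mixture_prob : probability (X * profile)%type R := mixture.

Lemma mixture_cyl (f : pred profile) B : measurable B ->
  mixture_prob ([set x | f x.2] `&` fst @^-1` B) =
  \int[mu]_(z in B) (\sum_(c | f c) w c z)%:E.
Proof.
move=> mB; have ysectionE c : ysection ([set x | f x.2] `&` fst @^-1` B) c =
    if f c then B else set0.
  apply/seteqP; split=> z; rewrite /ysection /= in_setE /=.
    by case: (f c) => -[].
  by case: (f c).
rewrite /= /mixture (eq_bigr (fun c =>
    if f c then \int[mu]_(z in B) (w c z)%:E else 0)); last first.
  by move=> c _; rewrite ysectionE; case: (f c); rewrite ?integral_set0.
rewrite -big_mkcond -big_filter -ge0_integral_sum//; last 2 first.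
- by move=> c; exact/measurable_EFinP/measurable_funTS.
- by move=> c z _; rewrite lee_fin.
by apply: eq_integral => z _; rewrite sumEFin big_filter.
Qed.

Lemma mixture_fst B : measurable B -> mixture_prob (fst @^-1` B) = mu B.
Proof.
move=> mB.
have -> : fst @^-1` B = [set x : X * profile | predT x.2] `&` fst @^-1` B.
  by apply/seteqP; split=> x // [].
rewrite [LHS]mixture_cyl//; under eq_integral do rewrite w_sum1.
by rewrite integral_cst// mul1e.
Qed.

End mixture.

Section roy_model_construction.
Context d dX (T : measurableType d) (X : measurableType dX) (R : realType)
  (P : probability T R) (Z : {mfun T >-> X}) (Y D : T -> bool)
  (q : bool -> bool -> X -> R) (p : bool -> bool -> R).
Hypotheses (mY : measurable_fun setT Y) (mD : measurable_fun setT D)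
  (Hq : cond_prob_version P Y D Z q) (pp : prob_vector p)
  (bounds : {ae distribution P Z, forall z,
     roy_sharp_bounds p (fun i j => q i j z)}).
Local Notation mu := (distribution P Z).

Definition roy_mixture : probability (X * profile)%type R :=
  mixture_prob mu (measurable_roy_weight p (proj1 Hq))
    (fun c z => roy_weight_ge0 (fun i j => q i j z) (proj1 pp) c)
    (fun z => roy_weight_sum1 (fun i j => q i j z) pp).

Let Zt : {mfun (X * profile)%type >-> X} := mfun_Sub (mem_set measurable_fst).

Lemma roy_mixture_fst : same_law P roy_mixture Z Zt.
Proof. by move=> A mA; rewrite /roy_mixture mixture_fst. Qed.

Lemma roy_mixture_cond_prob :
  cond_prob_version roy_mixture
    (fun x => profile_outcome x.2) (fun x => x.2.2) Zt q.
Proof.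
split=> [|i j B mB]; first exact: (proj1 Hq).
pose f c := (profile_outcome c == i) && (c.2 == j).
have -> : [set x | profile_outcome x.2 = i /\ x.2.2 = j] `&` Zt @^-1` B =
    [set x | f x.2] `&` fst @^-1` B.
  apply/seteqP; split=> x /=; rewrite /f.
    by case=> -[-> ->]; rewrite !eqxx.
  by case=> /andP[/eqP-> /eqP->].
rewrite /roy_mixture mixture_cyl//.
transitivity (\int[mu]_(z in B) (q i j z)%:E).
  apply: ae_eq_integral => //.
  - apply/measurable_EFinP; apply: measurable_funTS.
    under eq_fun do rewrite -big_filter.
    by apply: measurable_sum => c; exact: measurable_roy_weight (proj1 Hq) c.
  - exact/measurable_EFinP/measurable_funTS/(proj1 Hq).
  - apply: filterS2 bounds (cond_prob_vector mY mD Hq) => z bz qz _.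
    by rewrite /= (roy_weight_observed pp qz bz).
by apply: eq_measure_integral => A mA _; apply/esym; exact: mixture_fst.
Qed.

Lemma roy_mixture_pair_cyl (C : set (bool * bool)) B : measurable B ->
  roy_mixture ([set x | C (x.2.1.1, x.2.1.2)] `&` fst @^-1` B) =
  (\sum_(ab | `[< C ab >]) p ab.1 ab.2)%:E * mu B.
Proof.
move=> mB; pose f (c : profile) := `[< C c.1 >].
have -> : [set x : X * profile | C (x.2.1.1, x.2.1.2)] = [set x | f x.2].
  by apply/seteqP; split=> -[z [[a b] t]]; rewrite /f /= asboolE.
rewrite /roy_mixture mixture_cyl//.
under eq_integral do rewrite (roy_weight_marginal p _ (fun ab => `[< C ab >])).
exact: integral_cstr.
Qed.

Lemma roy_mixture_indep :
  independent_rv roy_mixture (fun x => (x.2.1.1, x.2.1.2)) fst.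
Proof.
move=> A B mA mB; rewrite roy_mixture_pair_cyl//; congr (_ * _).
  rewrite -[_ @^-1` A]setIT -(preimage_setT fst) roy_mixture_pair_cyl//.
  by rewrite probability_setT mule1.
by rewrite /roy_mixture mixture_fst.
Qed.

Lemma roy_mixture_potential i j :
  roy_mixture [set x | x.2.1.1 = i /\ x.2.1.2 = j] = (p i j)%:E.
Proof.
rewrite -[[set x | _]]setIT -(preimage_setT fst).
rewrite (roy_mixture_pair_cyl [set ab | ab.1 = i /\ ab.2 = j])//.
rewrite probability_setT mule1 (big_pred1 (i, j))// => -[a b] /=.
by apply/asboolP/eqP => [[-> ->]|[-> ->]].
Qed.

End roy_model_construction.

Unset Implicit Arguments.

Theorem theorem2 (R : realType) (d : measure_display) (T : measurableType d)
  (P : probability T R) (k : nat)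
  (Y D : T -> bool) (Z : T -> k.-tuple R)
  (q : bool -> bool -> k.-tuple R -> R) :
  measurable_fun setT Y -> measurable_fun setT D -> measurable_fun setT Z ->
  cond_prob_version P Y D Z q ->
  (* (1) sharp bounds are implied by the model *)
  (forall Y0 Y1 : T -> bool,
     measurable_fun setT Y0 -> measurable_fun setT Y1 ->
     independent_rv P (fun w => (Y0 w, Y1 w)) Z ->
     (forall w, Y w = if D w then Y1 w else Y0 w) ->
     {ae pushforward P Z, forall z,
        [/\ 0 <= P [set w | Y0 w = true /\ Y1 w = true]
              <= (q true false z + q true true z)%:E &
        [/\
            0 <= P [set w | Y0 w = false /\ Y1 w = false]
              <= (q false false z + q false true z)%:E,
            0 <= P [set w | Y0 w = true /\ Y1 w = false]
              <= (q true false z + q false true z)%:E,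
            0 <= P [set w | Y0 w = false /\ Y1 w = true]
              <= (q false false z + q true true z)%:E,
            (q true false z)%:E <= P [set w | Y0 w = true]
              <= (1 - q false false z)%:E &
            (q true true z)%:E <= P [set w | Y1 w = true]
              <= (1 - q false true z)%:E]]}) /\
  (* (2) the bounds are sharp *)
  (forall p : bool -> bool -> R,
     (forall i j, (0 <= p i j)%R) ->
     (p false false + p false true + p true false + p true true = 1)%R ->
     {ae pushforward P Z, forall z,
        [/\ (p true true <= q true false z + q true true z)%R &
        [/\
            (p false false <= q false false z + q false true z)%R,
            (p true false <= q true false z + q false true z)%R,
            (p false true <= q false false z + q true true z)%R,
            (q true false z <= p true false + p true true
               <= 1 - q false false z)%R &
            (q true true z <= p false true + p true true
               <= 1 - q false true z)%R]]} ->
     exists (d' : measure_display) (T' : measurableType d')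
       (P' : probability T' R)
       (Yt Dt : T' -> bool) (Zt : T' -> k.-tuple R) (Y0 Y1 : T' -> bool),
       [/\ measurable_fun setT Yt, measurable_fun setT Dt,
           measurable_fun setT Zt, measurable_fun setT Y0 &
           measurable_fun setT Y1] /\
       [/\
           same_law P P' (fun w => (Y w, D w, Z w))
                         (fun w => (Yt w, Dt w, Zt w)),
           independent_rv P' (fun w => (Y0 w, Y1 w)) Zt,
           (forall w, Yt w = if Dt w then Y1 w else Y0 w) &
           (forall i j, P' [set w | Y0 w = i /\ Y1 w = j] = (p i j)%:E)]).
Proof.
move=> mY mD mZ Hq; pose Zf : {mfun T >-> _} := mfun_Sub (mem_set mZ).
split=> [Y0 Y1 mY0 mY1 indep roy|p p_ge0 p_sum1 bounds].
  exact: (roy_model_bounds (Z := Zf) mY mD mY0 mY1 Hq indep roy).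
have pp : prob_vector p by split.
have mprofile_fun (g : profile -> bool) :
    measurable_fun setT (fun x : (k.-tuple R * profile)%type => g x.2).
  by apply: measurableT_comp; last exact: measurable_snd.
exists _, _, (roy_mixture (Z := Zf) Hq pp), (fun x => profile_outcome x.2),
  (fun x => x.2.2), fst, (fun x => x.2.1.1), (fun x => x.2.1.2).
split; first split.
- exact: (mprofile_fun profile_outcome).
- exact: (mprofile_fun snd).
- exact: measurable_fst.
- exact: (mprofile_fun (fun c => c.1.1)).
- exact: (mprofile_fun (fun c => c.1.2)).
split=> //.
- exact: (same_law_of_cond_prob (Z := Zf) mY mD (mprofile_fun profile_outcome)
    (mprofile_fun snd) Hq
    (roy_mixture_cond_prob (Z := Zf) mY mD Hq pp bounds)
    (roy_mixture_fst (Z := Zf) Hq pp)).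
- exact: roy_mixture_indep.
- exact: roy_mixture_potential.
Qed.
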